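(* Fix $n\ge 2$ and let, for $1\le i\le n$, $(a_i,a_i',a_i'')$ be triples of regular closed subsets of $\mathbb{R}^2$ with $a_i''\neq\emptyset$, $a_i''\cap\overline{\mathbb{R}^2\setminus a_i'}=\emptyset$ and $a_i'\cap\overline{\mathbb{R}^2\setminus a_i}=\emptyset$, such that: $a_i'\cup a_{i+1}''\cup\dots\cup a_n''$ is connected for each $1\le i\le n-1$; $a_n'$ is connected; and $a_i\cap a_j=\emptyset$ for all $1\le i,j\le n$ with $j-i>1$. Then for every point $p_0\in a_1'$ and every point $p_n\in a_n''$ there exist points $p_1,\dots,p_{n-1}$ and Jordan arcs $\alpha_1,\dots,\alpha_n$ such that: (i) the concatenation $\alpha=\alpha_1\cdots\alpha_n$ is a Jordan arc from $p_0$ to $p_n$; (ii) $p_i\in a_{i+1}'\cap\alpha_i$ for all $1\le i<n$; and (iii) $\alpha_i\subseteq a_i$ for all $1\le i\le n$.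
   Context: A Jordan arc is a continuous injective map $[0,1]\to\mathbb{R}^2$ or a constant map, identified with its image. The concatenation $\alpha_1\cdots\alpha_n$ being a Jordan arc from $p_0$ to $p_n$ means each $\alpha_i$ ends where $\alpha_{i+1}$ begins, $\alpha_1$ starts at $p_0$, $\alpha_n$ ends at $p_n$, and the union traversed in order is a Jordan arc. *)

From HB Require Import structures.
From mathcomp Require Import all_boot all_order all_algebra.
From mathcomp Require Import all_classical all_reals all_analysis.
Set Implicit Arguments. Unset Strict Implicit. Unset Printing Implicit Defensive.
Import Order.TTheory GRing.Theory Num.Theory.
Import numFieldNormedType.Exports.
Local Open Scope classical_set_scope.
Local Open Scope ring_scope.

Definition regular_closed {T : topologicalType} (A : set T) : Prop :=
  closure (interior A) = A.

Definition unit_itv (R : realType) : set R := [set t | 0 <= t <= 1].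
Arguments unit_itv R : clear implicits.

Definition jordan_arc (R : realType) (f : R -> R * R) : Prop :=
  ({within (unit_itv R), continuous f} /\
   (forall s t, unit_itv R s -> unit_itv R t -> f s = f t -> s = t))
  \/ (exists c, forall t, unit_itv R t -> f t = c).

Definition trace (R : realType) (f : R -> R * R) : set (R * R) :=
  f @` unit_itv R.

(* The concatenation al 1 ... al n is a Jordan arc from p 0 to p n through
   p 1, ..., p (n-1): each al i is a Jordan arc from p (i-1) to p i, and the
   union traversed in order is a Jordan arc, i.e. there is one Jordan arc g
   from p 0 to p n and parameters 0 = t 0 <= t 1 <= ... <= t n = 1 with
   g (t i) = p i such that the trace of al i is g([t (i-1), t i]). *)
Definition concat_jordan_arc (R : realType) (n : nat)
    (al : nat -> R -> R * R) (p : nat -> R * R) : Prop :=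
  (forall i, (1 <= i <= n)%N ->
     jordan_arc (al i) /\ al i 0 = p i.-1 /\ al i 1 = p i) /\
  exists (g : R -> R * R) (t : nat -> R),
    [/\ jordan_arc g, g 0 = p 0%N, g 1 = p n, t 0%N = 0 & t n = 1] /\
    (forall i, (i < n)%N -> t i <= t i.+1) /\
    (forall i, (i <= n)%N -> g (t i) = p i) /\
    (forall i, (1 <= i <= n)%N ->
       trace (al i) = g @` [set s | t i.-1 <= s <= t i]).

(* The arcs are built one at a time.  Given the chain up to a point [p] of
   [a' i], consider the points reachable from [p] by polygonal arcs that run in
   the interior of [a i] and avoid the last arc built.  They form an open set
   which, together with [p], is relatively clopen in the connected set
   [a' i `|` a'' i.+1 `|` ... `|` a'' n]; so they reach [a' i.+1] (or [pn] when
   [i = n]), and cutting at the first hit gives the next arc.  Polygonal arcs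
   are used because their endpoint is exposed: short segments from it meet the
   arc nowhere else, so the reachable set contains all nearby points.  The
   earlier arcs lie in the [a j] with [j.+1 < i], which are disjoint from
   [a i], so the concatenation stays injective. *)

From HB Require Import structures.
From mathcomp Require Import all_boot all_order all_algebra.
From mathcomp Require Import all_classical all_reals all_analysis.
From mathcomp Require Import ring lra.
Import Order.TTheory GRing.Theory Num.Theory.
Import numFieldNormedType.Exports.
Local Open Scope classical_set_scope.
Local Open Scope ring_scope.
Set Implicit Arguments.
Unset Strict Implicit.
Unset Printing Implicit Defensive.

Section Paths.
Context {R : realType}.
Local Notation P := (R * R)%type.

Definition lerp (a b : P) (s : R) : P := a + s *: (b - a).

Definition seg (a b : P) : set P := lerp a b @` unit_itv R.

Definition unit_inj (f : R -> P) :=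
  forall s t, unit_itv R s -> unit_itv R t -> f s = f t -> s = t.

(* Satisfied by polygonal arcs.  Only the case [s = 1] matters in the end, but
   the property at every [s] is what passes to initial pieces [pinit f tau]. *)
Definition left_straight (f : R -> P) := forall s, 0 < s <= 1 ->
  exists2 s', 0 <= s' < s &
    (forall u, s' <= u <= s -> seg (f s') (f s) (f u)) /\
    (forall w, seg (f s') (f s) w -> exists2 u, s' <= u <= s & f u = w).

Definition pinit (f : R -> P) (tau : R) (s : R) : P := f (tau * s).

(* The concatenation of [f1] and [f2] when [f1 1 = c = f2 0], written without
   case distinction so that it is obviously continuous. *)
Definition pjoin (f1 f2 : R -> P) (c : P) (s : R) : P :=
  f1 (Num.min (2 * s) 1) + f2 (Num.max (2 * s - 1) 0) - c.

Lemma fstD (u v : P) : (u + v).1 = u.1 + v.1. Proof. by []. Qed.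
Lemma sndD (u v : P) : (u + v).2 = u.2 + v.2. Proof. by []. Qed.
Lemma fstN (u : P) : (- u).1 = - u.1. Proof. by []. Qed.
Lemma sndN (u : P) : (- u).2 = - u.2. Proof. by []. Qed.
Lemma fstZ (k : R) (u : P) : (k *: u).1 = k * u.1. Proof. by []. Qed.
Lemma sndZ (k : R) (u : P) : (k *: u).2 = k * u.2. Proof. by []. Qed.
Definition coordE := (fstD, sndD, fstN, sndN, fstZ, sndZ).

Lemma coordP (u v : P) : u.1 = v.1 -> u.2 = v.2 -> u = v.
Proof. by case: u v => [? ?] [? ?] /= -> ->. Qed.

Lemma unit_itv0 : unit_itv R 0.
Proof. by rewrite /unit_itv /= lexx ler01. Qed.

Lemma unit_itv1 : unit_itv R 1.
Proof. by rewrite /unit_itv /= lexx ler01. Qed.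

Lemma lerp0 a b : lerp a b 0 = a.
Proof. by rewrite /lerp scale0r addr0. Qed.

Lemma lerp1 a b : lerp a b 1 = b.
Proof. by rewrite /lerp scale1r addrC subrK. Qed.

Lemma lerp_lerpl (a b : P) l t : lerp (lerp a b l) b t = lerp a b (l + t * (1 - l)).
Proof. by apply: coordP; rewrite /lerp !coordE; ring. Qed.

Lemma lerp_lerpr (a b : P) s v : lerp a (lerp a b s) v = lerp a b (v * s).
Proof. by apply: coordP; rewrite /lerp !coordE; ring. Qed.

Lemma lerp_inj (a b : P) : a != b -> injective (lerp a b).
Proof.
move=> ab s t; rewrite /lerp => /addrI /eqP.
rewrite -subr_eq0 -scalerBl scaler_eq0 !subr_eq0 => /orP[/eqP //|/eqP ba].
by move: ab; rewrite ba eqxx.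
Qed.

Lemma seg_lerp (a b : P) s : unit_itv R s -> seg a b (lerp a b s).
Proof. by move=> h; exists s. Qed.

Lemma lerp_continuous a b : continuous (lerp a b).
Proof.
move=> s; apply: (@continuousD R P R (fun=> a) (fun s => s *: (b - a))).
  exact: cst_continuous.
apply: (@continuousZ R P R id (fun=> b - a)) => //; exact: cst_continuous.
Qed.

Lemma lerp_left_straight (a b : P) : left_straight (lerp a b).
Proof.
move=> s /andP[s0 s1]; exists 0; first by rewrite lexx s0.
split.
  move=> u /andP[u0 us]; exists (u / s); last by rewrite lerp0 lerp_lerpr mulfVK ?gt_eqF.
  by rewrite /unit_itv /= divr_ge0 ?(ltW s0) //= ler_pdivrMr // mul1r.
move=> w [v /andP[v0 v1] <-]; exists (v * s); first by apply/andP; split; nra.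
by rewrite lerp0 lerp_lerpr.
Qed.

Lemma pinit_continuous (f : R -> P) tau : continuous f -> continuous (pinit f tau).
Proof.
move=> hf s; apply: (continuous_comp _ (hf _)).
by apply: (@continuousM R R (fun=> tau) id) => //; exact: cst_continuous.
Qed.

Lemma pinit_unit_inj (f : R -> P) tau : unit_inj f -> 0 < tau <= 1 ->
  unit_inj (pinit f tau).
Proof.
move=> hf /andP[t0 t1] s t /andP[s0 s1] /andP[u0 u1] e.
have h x : 0 <= x -> x <= 1 -> unit_itv R (tau * x) by move=> *; apply/andP; split; nra.
by apply: (mulfI (lt0r_neq0 t0)); apply: hf e; exact: h.
Qed.

Lemma pinit_left_straight (f : R -> P) tau : left_straight f -> 0 < tau <= 1 ->
  left_straight (pinit f tau).
Proof.
move=> hf /andP[t0 t1] s /andP[s0 s1].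
have [|s'' /andP[h0 h1] [hu hw]] := hf (tau * s); first by apply/andP; split; nra.
exists (s'' / tau); first by rewrite divr_ge0 ?(ltW t0) //= ltr_pdivrMr // mulrC.
rewrite /pinit [tau * (s'' / tau)]mulrC divfK ?gt_eqF //; split.
  move=> u /andP[u0 u1]; apply: hu; rewrite ler_pM2l // u1 andbT.
  by rewrite -ler_pdivrMl // mulrC.
move=> w /hw [u /andP[u0 u1] <-]; exists (u / tau); last by rewrite mulrC divfK ?gt_eqF.
by rewrite ler_pM2r ?invr_gt0 // u0 /= ler_pdivrMr // mulrC.
Qed.

Lemma pjoinl f1 f2 c s : f2 0 = c -> s <= 2^-1 -> pjoin f1 f2 c s = f1 (2 * s).
Proof.
move=> h2 hs; have s1 : 2 * s <= 1 by lra.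
have s0 : 2 * s - 1 <= 0 by lra.
by rewrite /pjoin (min_idPl s1) (max_idPr s0) h2 addrK.
Qed.

Lemma pjoinr f1 f2 c s : f1 1 = c -> 2^-1 <= s -> pjoin f1 f2 c s = f2 (2 * s - 1).
Proof.
move=> h1 hs; have s1 : 1 <= 2 * s by lra.
have s0 : 0 <= 2 * s - 1 by lra.
by rewrite /pjoin (min_idPr s1) (max_idPl s0) h1 addrC addKr.
Qed.

Lemma pjoin_continuous (f1 f2 : R -> P) c :
  continuous f1 -> continuous f2 -> continuous (pjoin f1 f2 c).
Proof.
move=> h1 h2 s.
have dbl : continuous (fun s : R => 2 * s).
  by move=> x; apply: (@continuousM R R (fun=> 2) id); [exact: cst_continuous|].
have cmin : continuous (fun s : R => Num.min (2 * s) 1).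
  move=> x; apply: (@continuous_min R R (fun s => 2 * s) (fun=> 1)); first exact: dbl.
  exact: cst_continuous.
have cmax : continuous (fun s : R => Num.max (2 * s - 1) 0).
  move=> x; apply: (@continuous_max R R (fun s => 2 * s - 1) (fun=> 0)); last exact: cst_continuous.
  apply: (@continuousD R R^o R (fun s => 2 * s) (fun=> -1)); first exact: dbl.
  exact: cst_continuous.
apply: (@continuousD R P R (fun s => f1 (Num.min (2 * s) 1) + f2 (Num.max (2 * s - 1) 0))
  (fun=> - c)); last exact: cst_continuous.
apply: (@continuousD R P R (fun s => f1 (Num.min (2 * s) 1)) (fun s => f2 (Num.max (2 * s - 1) 0))).
  exact: (continuous_comp (cmin s) (h1 _)).
exact: (continuous_comp (cmax s) (h2 _)).
Qed.

Lemma pjoin_unit_inj (f1 f2 : R -> P) c :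
  unit_inj f1 -> unit_inj f2 -> f1 1 = c -> f2 0 = c ->
  (forall s t, unit_itv R s -> unit_itv R t -> f1 s = f2 t -> s = 1 /\ t = 0) ->
  unit_inj (pjoin f1 f2 c).
Proof.
move=> i1 i2 e1 e2 cr s t /andP[s0 s1] /andP[t0 t1].
have uL x : 0 <= x -> x <= 2^-1 -> unit_itv R (2 * x) by move=> *; apply/andP; split; lra.
have uR x : 2^-1 <= x -> x <= 1 -> unit_itv R (2 * x - 1) by move=> *; apply/andP; split; lra.
case: (leP s 2^-1) => hs; case: (leP t 2^-1) => ht.
- rewrite !pjoinl // => e; have := i1 _ _ (uL _ s0 hs) (uL _ t0 ht) e; lra.
- rewrite pjoinl // pjoinr ?(ltW ht) // => e.
  have [] := cr _ _ (uL _ s0 hs) (uR _ (ltW ht) t1) e; lra.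
- rewrite pjoinr ?(ltW hs) // pjoinl // => e.
  have [] := cr _ _ (uL _ t0 ht) (uR _ (ltW hs) s1) (esym e); lra.
- rewrite !pjoinr ?(ltW hs) ?(ltW ht) // => e.
  have := i2 _ _ (uR _ (ltW hs) s1) (uR _ (ltW ht) t1) e; lra.
Qed.

Lemma pjoin_left_straight (f1 f2 : R -> P) c :
  left_straight f1 -> left_straight f2 -> f1 1 = c -> f2 0 = c ->
  left_straight (pjoin f1 f2 c).
Proof.
move=> l1 l2 e1 e2 s /andP[s0 s1].
case: (leP s 2^-1) => hs.
  have hg x : x <= 2^-1 -> pjoin f1 f2 c x = f1 (2 * x) by move=> hx; exact: pjoinl.
  have [|s'' /andP[h0 h1] [hu hw]] := l1 (2 * s); first by apply/andP; split; lra.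
  exists (s'' / 2); first by apply/andP; split; lra.
  rewrite (hg (s'' / 2)) ?(hg s) //; last lra.
  have -> : 2 * (s'' / 2) = s'' by field.
  split.
    by move=> u /andP[u0 u1]; rewrite hg; [apply: hu|]; lra.
  move=> w /hw [u /andP[u0 u1] <-]; exists (u / 2); first by apply/andP; split; lra.
  by rewrite hg; [congr f1; field | lra].
have hg x : 2^-1 <= x -> pjoin f1 f2 c x = f2 (2 * x - 1) by move=> hx; exact: pjoinr.
have [|s'' /andP[h0 h1] [hu hw]] := l2 (2 * s - 1); first by apply/andP; split; lra.
exists ((s'' + 1) / 2); first by apply/andP; split; lra.
rewrite (hg ((s'' + 1) / 2)) ?(hg s); [|lra|lra].
have -> : 2 * ((s'' + 1) / 2) - 1 = s'' by field.
split.
  by move=> u /andP[u0 u1]; rewrite hg; [apply: hu|]; lra.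
move=> w /hw [u /andP[u0 u1] <-]; exists ((u + 1) / 2); first by apply/andP; split; lra.
by rewrite hg; [congr f2; field | lra].
Qed.

Lemma pjoin_imagel (f1 f2 : R -> P) c a b : f2 0 = c -> 0 <= a -> a <= b -> b <= 1 ->
  pjoin f1 f2 c @` [set s | a / 2 <= s <= b / 2] = f1 @` [set s | a <= s <= b].
Proof.
move=> e2 a0 ab b1; apply/seteqP; split => x [s /andP[h1 h2] <-].
  by rewrite pjoinl //; [exists (2 * s) => //; apply/andP; split|]; lra.
exists (s / 2); first by apply/andP; split; lra.
by rewrite pjoinl; [congr f1; field | | lra].
Qed.

Lemma pjoin_imager (f1 f2 : R -> P) c : f1 1 = c ->
  pjoin f1 f2 c @` [set s | 2^-1 <= s <= 1] = f2 @` unit_itv R.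
Proof.
move=> e1; apply/seteqP; split => x [s /andP[h1 h2] <-].
  by rewrite pjoinr //; exists (2 * s - 1) => //; apply/andP; split; lra.
exists ((s + 1) / 2); first by apply/andP; split; lra.
by rewrite pjoinr; [congr f2; field | | lra].
Qed.

End Paths.

Section TameArcs.
Context {R : realType}.
Local Notation P := (R * R)%type.

Lemma image_itv_closed (f : R -> P) (a b : R) :
  continuous f -> closed (f @` [set s | a <= s <= b]).
Proof.
move=> hf; apply: compact_closed; first exact: norm_hausdorff.
have -> : [set s | a <= s <= b] = `[a, b]%classic by apply/seteqP; split => x; rewrite /= in_itv.
by apply: continuous_compact; [exact: continuous_subspaceT | exact: segment_compact].
Qed.

Lemma trace_closed (f : R -> P) : continuous f -> closed (trace f).
Proof. exact: image_itv_closed. Qed.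

Lemma closed_unit_preimage (f : R -> P) (K : set P) : continuous f -> closed K ->
  closed [set s | unit_itv R s /\ K (f s)].
Proof.
move=> hf cK; apply: closedI; last by apply: preimage_closed => // x _; apply: hf.
have -> : unit_itv R = `[0, 1]%classic by apply/seteqP; split => x; rewrite /= in_itv.
exact: itv_closed.
Qed.

Lemma closed_inf_mem (E : set R) (M : R) : closed E -> E !=set0 -> lbound E M ->
  E (inf E).
Proof.
move=> cE nE lb; apply: (itv_closed_infimums nE cE); split.
  by apply: ge_inf; exists M.
by move=> y hy; apply: lb_le_inf.
Qed.

Lemma closed_sup_mem (E : set R) (M : R) : closed E -> E !=set0 -> ubound E M ->
  E (sup E).
Proof.
move=> cE nE ub; apply: (itv_closed_supremums nE cE); split.
  by apply: ub_le_sup; exists M.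
by move=> y hy; apply: ge_sup.
Qed.

Lemma first_hit (f : R -> P) (K : set P) : continuous f -> closed K ->
  K (f 1) -> ~ K (f 0) ->
  exists tau, [/\ 0 < tau <= 1, K (f tau) & forall s, 0 <= s < tau -> ~ K (f s)].
Proof.
move=> hf cK K1 K0; set T := [set s | unit_itv R s /\ K (f s)].
have lbT : lbound T 0 by move=> x [/andP[]].
have nT : T !=set0 by exists 1; split => //; exact: unit_itv1.
have [/andP[i0 i1] Ki] := closed_inf_mem (closed_unit_preimage hf cK) nT lbT.
exists (inf T); split => //.
  by rewrite i1 andbT lt_neqAle i0 andbT; apply/eqP => e; apply: K0; rewrite e.
move=> s /andP[s0 sT] Ks; suff : inf T <= s by rewrite leNgt sT.
apply: ge_inf; first by exists 0.
by split => //; rewrite /unit_itv /= s0 (ltW (lt_le_trans sT i1)).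
Qed.

Lemma last_hit (f : R -> P) (K : set P) : continuous f -> closed K -> K (f 0) ->
  exists l, [/\ unit_itv R l, K (f l) & forall s, l < s <= 1 -> ~ K (f s)].
Proof.
move=> hf cK K0; set T := [set s | unit_itv R s /\ K (f s)].
have ubT : ubound T 1 by move=> x [/andP[]].
have nT : T !=set0 by exists 0; split => //; exact: unit_itv0.
have [/andP[u0 u1] KT] := closed_sup_mem (closed_unit_preimage hf cK) nT ubT.
exists (sup T); split => //; first exact/andP.
move=> s /andP[Ts s1] Ks; suff : s <= sup T by rewrite leNgt Ts.
apply: sup_upper_bound; first by split; [exact: nT | exists 1].
by split => //; rewrite /unit_itv /= s1 andbT (le_trans u0 (ltW Ts)).
Qed.

Definition tame_arc (f : R -> P) := [/\ continuous f, unit_inj f & left_straight f].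

Lemma lerp_tame_arc (a b : P) : a != b -> tame_arc (lerp a b).
Proof.
move=> ab; split; [exact: lerp_continuous | | exact: lerp_left_straight].
by move=> s t _ _; apply: lerp_inj.
Qed.

Lemma pinit_tame_arc (f : R -> P) tau : tame_arc f -> 0 < tau <= 1 ->
  tame_arc (pinit f tau).
Proof.
case=> fc fi fl ht; split; first exact: pinit_continuous.
  exact: pinit_unit_inj.
exact: pinit_left_straight.
Qed.

Lemma pinit_trace (f : R -> P) tau : 0 < tau <= 1 -> trace (pinit f tau) `<=` trace f.
Proof.
by case/andP=> t0 t1 _ [s /andP[s0 s1] <-]; exists (tau * s) => //; apply/andP; split; nra.
Qed.

Lemma tame_arc_extend (f : R -> P) (z : P) : tame_arc f -> f 1 != z ->
  (forall t, 0 < t <= 1 -> ~ trace f (lerp (f 1) z t)) ->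
  tame_arc (pjoin f (lerp (f 1) z) (f 1)).
Proof.
case=> fc fi fl fz off; split.
- exact/pjoin_continuous/lerp_continuous.
- apply: (pjoin_unit_inj fi _ erefl (lerp0 _ _)); first by move=> s t _ _; apply: lerp_inj.
  move=> s t hs /andP[t0 t1] e.
  have t0' : t = 0.
    apply/eqP; rewrite eq_le t0 andbT leNgt; apply/negP => tp.
    by apply: (off t); [rewrite tp | exists s].
  by move: e; rewrite t0' lerp0 => /(fi _ _ hs unit_itv1).
- by apply: pjoin_left_straight; rewrite ?lerp0 //; exact: lerp_left_straight.
Qed.

Definition tame_reach (U : set P) (p y : P) := exists f,
  [/\ tame_arc f, f 0 = p, f 1 = y & forall s, 0 < s <= 1 -> U (f s)].

Lemma tame_reach_end U p y : tame_reach U p y -> U y.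
Proof. by case=> f [_ _ <- fU]; apply: fU; rewrite ltr01 lexx. Qed.

(* Cut the arc at its last point on the segment from [y] to [z], then follow
   the segment. *)
Lemma tame_reach_seg U p y z : ~ U p -> tame_reach U p y -> seg y z `<=` U ->
  tame_reach U p z.
Proof.
move=> Up [f [af f0 f1 fU]] yzU; case: (af) => fc _ _.
have [|l [ul [sx usx fsx] nT]] := last_hit (lerp_continuous (a:=y) (b:=z)) (trace_closed fc).
  by exists 1; rewrite ?lerp0 //; exact: unit_itv1.
set x := lerp y z l in fsx.
have /andP[l0 _] := ul.
have sx0 : 0 < sx <= 1.
  case/andP: usx => s0 ->; rewrite andbT lt_neqAle s0 andbT eq_sym; apply/eqP => sx0.
  by apply: Up; rewrite -f0 -sx0 fsx; apply: yzU; exists l.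
have ag := pinit_tame_arc af sx0.
have gU s : 0 < s <= 1 -> U (pinit f sx s).
  by case/andP=> s0 s1; apply: fU; apply/andP; split; nra.
have [xz|xz] := eqVneq x z.
  by exists (pinit f sx); split; rewrite /pinit ?mulr0 ?mulr1 ?fsx.
have l1 : l < 1.
  rewrite lt_neqAle; case/andP: ul => _ ->; rewrite andbT.
  by apply/eqP => e; move: xz; rewrite /x e lerp1 eqxx.
have gx : pinit f sx 1 = x by rewrite /pinit mulr1.
have xzE t : lerp x z t = lerp y z (l + t * (1 - l)) by rewrite lerp_lerpl.
exists (pjoin (pinit f sx) (lerp x z) x); split.
- rewrite -{1 2}gx; apply: tame_arc_extend; rewrite ?gx // => t /andP[t0 t1] /(pinit_trace sx0).
  by rewrite xzE; apply: nT; apply/andP; split; nra.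
- by rewrite pjoinl ?lerp0 ?mulr0 /pinit ?mulr0 //; lra.
- rewrite pjoinr ?gx //; last lra.
  have -> : 2 * 1 - 1 = 1 :> R by lra.
  exact: lerp1.
move=> s /andP[s0 s1]; case: (leP s 2^-1) => hs.
  by rewrite pjoinl ?lerp0 //; apply: gU; apply/andP; split; lra.
rewrite pjoinr ?(ltW hs) // xzE; apply: yzU; exists (l + (2 * s - 1) * (1 - l)) => //.
by apply/andP; split; nra.
Qed.

End TameArcs.

Section Segments.
Context {R : realType}.
Local Notation P := (R * R)%type.

Lemma open_ball_sub (W : set P) (y : P) : open W -> W y ->
  exists2 e : R, 0 < e & ball y e `<=` W.
Proof. by move=> oW Wy; apply/nbhs_ballP/open_nbhs_nbhs. Qed.

Lemma closed_set1 (p : P) : closed [set p].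
Proof. exact/(compact_closed (@norm_hausdorff _ _))/finite_compact/finite_set1. Qed.

Lemma ball_ltE (c x : P) (e : R) : ball c e x = (`|c - x| < e).
Proof. by rewrite -ball_normE. Qed.

Lemma seg_ball (c x y : P) (e : R) : ball c e x -> ball c e y -> seg x y `<=` ball c e.
Proof.
rewrite !ball_ltE => hx hy _ [s /andP[s0 s1] <-]; rewrite ball_ltE.
have -> : c - lerp x y s = (1 - s) *: (c - x) + s *: (c - y).
  by apply: coordP; rewrite /lerp !coordE; ring.
apply: (le_lt_trans (ler_normD _ _)); rewrite !normrZ !ger0_norm ?subr_ge0 //.
have [->|s1'] := eqVneq s 1; first by rewrite subrr mul0r add0r mul1r.
have : s < 1 by rewrite lt_neqAle s1' s1.
nra.
Qed.

Lemma seg_sym (a b : P) : seg a b = seg b a.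
Proof.
suff sub (x y : P) : seg x y `<=` seg y x by apply/seteqP; split; apply: sub.
move=> _ [s /andP[s0 s1] <-]; exists (1 - s); first by apply/andP; split; lra.
by apply: coordP; rewrite /lerp !coordE; ring.
Qed.

Lemma seg_of_scale (p u z : P) (l m : R) : 0 < l -> 0 <= m <= l ->
  l *: (z - p) = m *: (u - p) -> seg p u z.
Proof.
move=> l0 /andP[m0 ml] e; exists (m / l).
  by rewrite /unit_itv /= divr_ge0 ?(ltW l0) //= ler_pdivrMr // mul1r.
by rewrite /lerp mulrC -scalerA -e scalerA mulVf ?lt0r_neq0 // scale1r addrC subrK.
Qed.

Lemma seg_common_ray (p u z w : P) : seg p z w -> seg p u w -> w != p ->
  seg p u z \/ seg p z u.
Proof.
move=> [l /andP[l0 _] <-] [m /andP[m0 _] /esym /addrI e] wp.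
have l0' : 0 < l.
  by rewrite lt_neqAle l0 andbT; apply: contraNneq wp => <-; rewrite lerp0 eqxx.
have m0' : 0 < m.
  rewrite lt_neqAle m0 andbT; apply: contraNneq wp => m0e.
  by rewrite /lerp e -m0e scale0r addr0 eqxx.
case: (leP m l) => ml.
  by left; apply: (seg_of_scale l0' _ e); rewrite m0 ml.
by right; apply: (seg_of_scale m0' _ (esym e)); rewrite l0 (ltW ml).
Qed.

Definition exposed (A : set P) (p : P) := exists2 r : R, 0 < r &
  forall z, ball p r z -> ~ A z -> forall w, seg p z w -> A w -> w = p.

Lemma exposed1 (p : P) : exposed [set p] p.
Proof. by exists 1 => // z _ _ w _ ->. Qed.

(* Near its end the arc is a segment [u, f 1]; a segment from [f 1] meeting
   it elsewhere would run along it and so end on the arc or pass [u]. *)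
Lemma tame_arc_exposed (f : R -> P) : tame_arc f -> exposed (trace f) (f 1).
Proof.
case=> fc fi fl; have [|s' /andP[s0 s1] [hu hw]] := fl 1; first by rewrite ltr01 lexx.
set A0 := f @` [set s | 0 <= s <= s'].
have nA0 : ~ A0 (f 1).
  case=> t /andP[t0 t1] ft; have ut : unit_itv R t by apply/andP; split; lra.
  by move: s1; rewrite -(fi _ _ ut unit_itv1 ft) ltNge t1.
have [r r0 sub] := open_ball_sub (closed_openC (image_itv_closed (a:=0) (b:=s') fc)) nA0.
exists r => // z bz nz w pzw [t /andP[t0 t1] ew].
have bw : ball (f 1) r w := seg_ball (ballxx _ r0) bz pzw.
have [ts|st] := leP t s'; first by exfalso; apply: (sub _ bw); exists t => //; apply/andP.
have uw : seg (f 1) (f s') w by rewrite seg_sym -ew; apply: hu; rewrite (ltW st) t1.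
have [//|wp] := eqVneq w (f 1); exfalso; case: (seg_common_ray pzw uw wp).
  by rewrite seg_sym => /hw [v /andP[v0 v1] fv]; apply: nz; exists v => //; apply/andP; split; lra.
move=> /(seg_ball (ballxx _ r0) bz) /sub; apply; exists s' => //.
by apply/andP; split.
Qed.

End Segments.

Section Escape.
Context {R : realType}.
Local Notation P := (R * R)%type.
Variables (W F A K M : set P) (p : P).
Hypotheses (oW : open W) (cF : closed F) (WF : W `<=` F).
Hypotheses (cA : closed A) (Ap : A p) (Wp : W p) (eAp : exposed A p).
Hypotheses (cK : closed K) (nKp : ~ K p) (cM : connected M) (Mp : M p).
Hypothesis M_near : exists2 r : R, 0 < r &
  forall x, M x -> ball p r x -> x = p \/ (W x /\ ~ A x).
Hypothesis M_cover : forall x, M x -> x <> p -> (W x /\ ~ A x) \/ K° x \/ ~ F x.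
Hypothesis M_exit : exists y, M y /\ (K y \/ ~ F y).

Local Notation U := (W `&` ~` A).
Local Notation C := [set y | tame_reach U p y].

Let oU : open U.
Proof. by apply: openI => //; exact: closed_openC. Qed.

Let nUp : ~ U p.
Proof. by case. Qed.

Lemma tame_reach_ball y e : C y -> 0 < e -> ball y e `<=` U -> ball y e `<=` C.
Proof.
move=> Cy e0 yU z yz; apply: (tame_reach_seg nUp Cy) => w yzw.
exact/yU/(seg_ball (ballxx y e0) yz yzw).
Qed.

Lemma tame_reach_open : open C.
Proof.
rewrite openE => y Cy; have [e e0 yU] := open_ball_sub oU (tame_reach_end Cy).
by apply/nbhs_ballP; exists e => //; exact: tame_reach_ball.
Qed.

Lemma tame_reach_closure x : U x -> closure C x -> C x.
Proof.
move=> Ux clx; have [e e0 xU] := open_ball_sub oU Ux.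
have [y [Cy xy]] : C `&` ball x e !=set0 by apply: clx; apply/nbhs_ballP; exists e.
apply: (tame_reach_seg nUp Cy) => w yxw; apply: xU.
exact: (seg_ball xy (ballxx x e0) yxw).
Qed.

Lemma tame_reach_near : exists2 r : R, 0 < r &
  forall x, M x -> ball p r x -> x <> p -> C x.
Proof.
have [r1 r10 vis] := eAp; have [r2 r20 nearM] := M_near.
have [r3 r30 pW] := open_ball_sub oW Wp.
exists (Num.min r1 (Num.min r2 r3)); first by rewrite !lt_min r10 r20 r30.
move=> x Mx bx xp; have [b1 b2 b3] : [/\ ball p r1 x, ball p r2 x & ball p r3 x].
  by split; apply: le_ball bx; rewrite !ge_min lexx ?orbT.
have [//|[Wx nAx]] := nearM _ Mx b2.
have px : p != x by apply/eqP => e; apply: xp.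
exists (lerp p x); split; [exact: lerp_tame_arc | exact: lerp0 | exact: lerp1 |].
move=> s /andP[s0 s1].
have pxs : seg p x (lerp p x s) by apply: seg_lerp; rewrite /unit_itv /= s1 ltW.
split; first exact: pW (seg_ball (ballxx _ r30) b3 pxs).
move=> /(vis _ b1 nAx _ pxs); rewrite -{2}(lerp0 p x) => /(lerp_inj px) s0'.
by move: s0; rewrite s0' ltxx.
Qed.

(* [M] is connected, and [C] together with [p] is relatively clopen in it. *)
Lemma tame_reach_hits : exists y, C y /\ K y.
Proof.
apply: contrapT => nCK; have [r r0 nearC] := tame_reach_near.
have CF : closure C `<=` F.
  by rewrite (closure_id F).1 //; apply: closureS => y /tame_reach_end [/WF].
suff XM : M `&` (C `|` [set p]) = M.
  have [y [My Ky]] := M_exit; have : (M `&` (C `|` [set p])) y by rewrite XM.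
  case=> _ [Cy|yp].
    have [Wy _] := tame_reach_end Cy.
    by case: Ky => [Ky|]; [apply: nCK; exists y | apply; exact: WF].
  by move: Ky; rewrite yp => -[//|]; apply; exact: WF.
apply: cM; first by exists p; split => //; right.
- exists (C `|` ball p r); first by apply: openU; [exact: tame_reach_open | exact: ball_open].
  apply/seteqP; split => x [Mx Cx]; split => //.
    by case: Cx => [Cx|->]; [left | right; exact: ballxx].
  case: Cx => [|bx]; first by left.
  by have [->|xp] := pselect (x = p); [right | left; apply: nearC].
- exists (closure C `|` [set p]).
    by apply: closedU; [exact: closed_closure | exact: closed_set1].
  apply/seteqP; split => x [Mx Cx]; split => //.
    by case: Cx => [Cx|->]; [left; exact: subset_closure | right].
  case: Cx => [clx|]; last by right.
  have [->|xp] := pselect (x = p); [by right | left].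
  case: (M_cover Mx xp) => [Ux|[Kx|nFx]]; first exact: tame_reach_closure.
    have [z [Cz Kz]] := clx _ Kx.
    by case: nCK; exists z; split => //; exact: interior_subset.
  by case: nFx; exact: CF.
Qed.

Lemma escape_arc : exists f, [/\ tame_arc f, f 0 = p, K (f 1),
  (forall s, 0 < s <= 1 -> W (f s) /\ ~ A (f s)) & (forall s, 0 <= s < 1 -> ~ K (f s))].
Proof.
have [y [[f [af f0 f1 fU]] Ky]] := tame_reach_hits.
have [fc _ _] := af; have K1 : K (f 1) by rewrite f1.
have [|tau [t01 Kt nKt]] := first_hit fc cK K1; first by rewrite f0.
case/andP: (t01) => t0 t1.
exists (pinit f tau); split; rewrite /pinit ?mulr0 ?mulr1 //.
- exact: pinit_tame_arc.
- by move=> s /andP[s0 s1]; apply: fU; apply/andP; split; nra.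
- by move=> s /andP[s0 s1]; apply: nKt; apply/andP; split; nra.
Qed.

End Escape.

Definition upd (T : Type) (f : nat -> T) (k : nat) (x : T) (i : nat) : T :=
  if i == k then x else f i.

Lemma upd_eq T (f : nat -> T) k x : upd f k x k = x.
Proof. by rewrite /upd eqxx. Qed.

Lemma upd_lt T (f : nat -> T) k x i : (i < k)%N -> upd f k x i = f i.
Proof. by move=> ik; rewrite /upd ltn_eqF. Qed.

Lemma leqS_split (i k : nat) : (i <= k.+1)%N -> i = k.+1 \/ (i <= k)%N.
Proof. by rewrite leq_eqVlt ltnS => /orP[/eqP|]; [left | right]. Qed.

Section Chains.
Context {R : realType}.
Local Notation P := (R * R)%type.

Definition arc_chain (k : nat) (p : nat -> P) (al : nat -> R -> P) (G : R -> P)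
    (t : nat -> R) : Prop :=
  [/\ continuous G, jordan_arc G, G 0 = p 0%N, G 1 = p k & t 0%N = 0] /\
  [/\ t k = 1, (forall i, (i < k)%N -> t i <= t i.+1),
      (forall i, (i <= k)%N -> G (t i) = p i),
      (forall i, (1 <= i <= k)%N -> trace (al i) = G @` [set s | t i.-1 <= s <= t i]) &
      (forall i, (i <= k)%N -> 0 <= t i <= 1)].

Lemma image_const (f : R -> P) (a b : R) c : a <= b ->
  (forall s, a <= s <= b -> f s = c) -> f @` [set s | a <= s <= b] = [set c].
Proof.
move=> ab hf; apply/seteqP; split => [x [s hs <-]|x ->]; first by rewrite /= hf.
have ha : a <= a <= b by rewrite lexx ab.
by exists a => //; exact: hf.
Qed.

Lemma image_pt (f : R -> P) (a : R) : f @` [set s | a <= s <= a] = [set f a].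
Proof. by apply: image_const => // s /andP[h1 h2]; congr f; apply/eqP; rewrite eq_le h1 h2. Qed.

Lemma arc_chain_mono k p al G t i : arc_chain k p al G t -> (1 <= i <= k)%N ->
  t i.-1 <= t i.
Proof. by case=> _ [_ tm _ _ _] /andP[i1 ik]; have := tm i.-1; rewrite prednK // => ->. Qed.

Variables (k : nat) (p : nat -> P) (al : nat -> R -> P) (G : R -> P) (t : nat -> R).
Hypothesis chain : arc_chain k p al G t.

Lemma arc_chain_const (b : R -> P) : (forall s, b s = p k) ->
  arc_chain k.+1 (upd p k.+1 (b 1)) (upd al k.+1 b) G (upd t k.+1 1).
Proof.
move: chain => [[Gc Gj G0 G1 t0] [tk tm Gt tr tb]] bc.
split; split; rewrite ?upd_eq ?bc //.
- move=> i; rewrite ltnS leq_eqVlt => /orP[/eqP ->|ik]; first by rewrite upd_eq upd_lt ?tk.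
  by rewrite !upd_lt ?tm // ltnS ltnW.
- by move=> i /leqS_split[->|ik]; rewrite ?upd_eq ?upd_lt ?ltnS ?Gt.
- move=> i /andP[i1 /leqS_split[->|ik]]; last first.
    by rewrite !upd_lt ?ltnS ?(leq_trans (leq_pred _)) // tr ?i1.
  rewrite !upd_eq /= upd_lt // tk image_pt G1; apply: image_const; first exact: ler01.
  by move=> s _; rewrite bc.
- by move=> i /leqS_split[->|ik]; rewrite ?upd_eq ?ler01 ?lexx // upd_lt ?tb.
Qed.

Lemma arc_chain_start (b : R -> P) : (forall s, unit_itv R s -> G s = p k) ->
  continuous b -> unit_inj b -> b 0 = p k ->
  arc_chain k.+1 (upd p k.+1 (b 1)) (upd al k.+1 b) b (upd (fun=> 0) k.+1 1).
Proof.
move: (chain) => [[Gc Gj G0 G1 t0] [tk tm Gt tr tb]] Gk bc bi b0.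
have t01 j : upd (fun=> 0 : R) k.+1 1 j = 0 \/ upd (fun=> 0 : R) k.+1 1 j = 1.
  by rewrite /upd; case: ifP; [right | left].
have pk i : (i <= k)%N -> p i = p k by move=> ik; rewrite -Gt // Gk //; exact: tb.
split; split; rewrite ?upd_eq ?upd_lt //.
- by left; split => //; exact: continuous_subspaceT.
- by rewrite b0 pk.
- by move=> i ik; rewrite upd_lt //; case: (t01 i.+1) => ->; rewrite ?lexx ?ler01.
- move=> i /leqS_split[->|ik]; first by rewrite !upd_eq.
  by rewrite !upd_lt ?ltnS // b0 pk.
- move=> i /andP[i1 /leqS_split[->|ik]].
    by rewrite !upd_eq /= upd_lt //; reflexivity.
  rewrite !upd_lt ?ltnS ?(leq_trans (leq_pred _)) // tr ?i1 // image_pt b0.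
  apply: image_const; first by apply: (arc_chain_mono chain); rewrite i1.
  move=> s /andP[s0 s1]; apply: Gk.
  have /andP[? _] := tb _ (leq_trans (leq_pred i) ik); have /andP[_ ?] := tb _ ik.
  by apply/andP; split; lra.
- by move=> i _; case: (t01 i) => ->; rewrite ?lexx ?ler01.
Qed.

Lemma arc_chain_join (b : R -> P) : unit_inj G -> continuous b -> unit_inj b ->
  b 0 = p k ->
  (forall s u, unit_itv R s -> unit_itv R u -> G s = b u -> s = 1 /\ u = 0) ->
  arc_chain k.+1 (upd p k.+1 (b 1)) (upd al k.+1 b) (pjoin G b (p k))
    (upd (fun i => t i / 2) k.+1 1).
Proof.
move: (chain) => [[Gc Gj G0 G1 t0] [tk tm Gt tr tb]] Gi bc bi b0 cross.
have Jc := pjoin_continuous (c := p k) Gc bc.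
have J1 : pjoin G b (p k) 1 = b 1 by rewrite pjoinr //; [congr b | ]; lra.
split; split; rewrite ?upd_eq ?upd_lt //.
- left; split; first exact: continuous_subspaceT.
  exact: pjoin_unit_inj.
- by rewrite pjoinl ?mulr0 //; lra.
- by rewrite t0 mul0r.
- move=> i; rewrite ltnS leq_eqVlt => /orP[/eqP ->|ik].
    by rewrite upd_eq upd_lt // tk; lra.
  by rewrite !upd_lt ?ltnS ?(ltnW ik) //; have := tm _ ik; lra.
- move=> i /leqS_split[->|ik]; first by rewrite !upd_eq.
  have /andP[_ ti1] := tb _ ik.
  have ti : t i / 2 <= 2^-1 by lra.
  by rewrite !upd_lt ?ltnS // pjoinl // mulrC divfK ?Gt.
- move=> i /andP[i1 /leqS_split[->|ik]].
    rewrite !upd_eq /= upd_lt // tk /trace -(pjoin_imager b G1).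
    by congr image; apply/seteqP; split => x /=; rewrite mul1r.
  have /andP[ti0 ti1] := tb _ (leq_trans (leq_pred i) ik).
  rewrite !upd_lt ?ltnS ?(leq_trans (leq_pred _)) // tr ?i1 // pjoin_imagel //.
    by apply: (arc_chain_mono chain); rewrite i1.
  by have /andP[] := tb _ ik.
- move=> i /leqS_split[->|ik]; first by rewrite upd_eq lexx ler01.
  by rewrite upd_lt ?ltnS //; have /andP[? ?] := tb _ ik; apply/andP; split; lra.
Qed.

Lemma arc_chain_snoc (b : R -> P) : continuous b -> b 0 = p k ->
  unit_inj b \/ (forall s, b s = p k) ->
  (unit_inj G -> unit_inj b ->
     forall s u, unit_itv R s -> unit_itv R u -> G s = b u -> s = 1 /\ u = 0) ->
  exists G' t', arc_chain k.+1 (upd p k.+1 (b 1)) (upd al k.+1 b) G' t' /\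
    (forall s, unit_itv R s -> trace b (G' s) \/ trace G (G' s)).
Proof.
move=> bc b0 [bi|bk] cross; have [[_ Gj _ G1 _] _] := chain; last first.
  by exists G, (upd t k.+1 1); split; [exact: arc_chain_const | move=> s hs; right; exists s].
have [Gi|nGi] := pselect (unit_inj G).
  exists (pjoin G b (p k)), (upd (fun i => t i / 2) k.+1 1).
  split; first exact: arc_chain_join (cross Gi bi).
  move=> s /andP[s0 s1]; have [hs|hs] := leP s 2^-1.
    by right; exists (2 * s); [apply/andP; split; lra | rewrite pjoinl].
  by left; exists (2 * s - 1); [apply/andP; split; lra | rewrite pjoinr // ltW].
have Gk s : unit_itv R s -> G s = p k.
  case: Gj => [[_ /nGi []]|[c Gc]] hs.
  by rewrite -G1 !Gc //; exact: unit_itv1.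
exists b, (upd (fun=> 0) k.+1 1); split; first exact: arc_chain_start.
by move=> s hs; left; exists s.
Qed.

End Chains.

Lemma closureC_disj_interior (T : topologicalType) (A B : set T) :
  A `&` closure (~` B) = set0 -> A `<=` B°.
Proof.
move=> h x Ax; apply: contrapT => nBx.
have : (A `&` closure (~` B)) x by split => //; rewrite closure_setC.
by rewrite h.
Qed.

Lemma regular_closed_closed (T : topologicalType) (A : set T) :
  regular_closed A -> closed A.
Proof. by rewrite /regular_closed => <-; exact: closed_closure. Qed.

Lemma jordan_arcW (R : realType) (b : R -> R * R) :
  continuous b -> unit_inj b \/ (forall s, b s = b 0) -> jordan_arc b.
Proof.
move=> bc [bi|bk]; first by left; split => //; exact: continuous_subspaceT.
by right; exists (b 0) => s _; exact: bk.
Qed.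

Section ArcThroughRegions.
Context {R : realType}.
Local Notation P := (R * R)%type.
Variables (n : nat) (a a' a'' : nat -> set P) (p0 pn : P).
Hypothesis hn : (2 <= n)%N.
Hypothesis H1 : forall i, (1 <= i <= n)%N ->
  regular_closed (a i) /\ regular_closed (a' i) /\ regular_closed (a'' i) /\
  a'' i !=set0 /\ a'' i `&` closure (~` a' i) = set0 /\ a' i `&` closure (~` a i) = set0.
Hypothesis Hc : forall i, (1 <= i <= n.-1)%N ->
  connected (a' i `|` \bigcup_(j in [set j | (i < j <= n)%N]) a'' j).
Hypothesis Hcn : connected (a' n).
Hypothesis Hd : forall i j, (1 <= i <= n)%N -> (1 <= j <= n)%N -> (i.+1 < j)%N ->
  a i `&` a j = set0.
Hypotheses (hp0 : a' 1%N p0) (hpn : a'' n pn).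

Lemma a'_int i : (1 <= i <= n)%N -> a' i `<=` (a i)°.
Proof. by move=> hi; apply: closureC_disj_interior; have [_ [_ [_ [_ []]]]] := H1 hi. Qed.

Lemma a''_int i : (1 <= i <= n)%N -> a'' i `<=` (a' i)°.
Proof. by move=> hi; apply: closureC_disj_interior; have [_ [_ [_ [_ []]]]] := H1 hi. Qed.

Lemma a'_a i : (1 <= i <= n)%N -> a' i `<=` a i.
Proof. by move=> hi x /(a'_int hi) /interior_subset. Qed.

Lemma a''_a' i : (1 <= i <= n)%N -> a'' i `<=` a' i.
Proof. by move=> hi x /(a''_int hi) /interior_subset. Qed.

Lemma a''_a i : (1 <= i <= n)%N -> a'' i `<=` a i.
Proof. by move=> hi x /(a''_a' hi) /(a'_a hi). Qed.

Lemma a_closed i : (1 <= i <= n)%N -> closed (a i).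
Proof. by move=> hi; apply: regular_closed_closed; case: (H1 hi). Qed.

Lemma a'_closed i : (1 <= i <= n)%N -> closed (a' i).
Proof. by move=> hi; apply: regular_closed_closed; have [_ []] := H1 hi. Qed.

Lemma a''_closed i : (1 <= i <= n)%N -> closed (a'' i).
Proof. by move=> hi; apply: regular_closed_closed; have [_ [_ []]] := H1 hi. Qed.

Lemma a_disj i j x : (1 <= i <= n)%N -> (1 <= j <= n)%N -> (i.+1 < j)%N ->
  a i x -> a j x -> False.
Proof. by move=> hi hj hij ai aj; have /seteqP[/(_ x (conj ai aj))] := Hd hi hj hij. Qed.

Definition a''_after i := \bigcup_(j in [set j | (i < j <= n)%N]) a'' j.

Definition arc_target i : set P := if (i < n)%N then a' i.+1 else [set pn].

(* The connected set in which the [i]-th arc is sought. *)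
Definition region i : set P := if (i < n)%N then a' i `|` a''_after i else a' i.

Lemma a''_after_closed i : closed (a''_after i).
Proof.
apply: closed_bigcup.
  by apply: (@sub_finite_set _ _ `I_n.+1) => [j /andP[_ jn]|]; [rewrite /= ltnS | exact: finite_II].
move=> j /andP[ij jn]; apply: a''_closed; rewrite jn andbT.
exact: leq_ltn_trans ij.
Qed.

Lemma arc_target_closed i : (1 <= i <= n)%N -> closed (arc_target i).
Proof.
move=> /andP[i1 iN]; rewrite /arc_target; case: ifP => h; last exact: closed_set1.
by apply: a'_closed; rewrite h andbT.
Qed.

Lemma region_connected i : (1 <= i <= n)%N -> connected (region i).
Proof.
case/andP=> i1 iN; rewrite /region; case: ifP => h.
  by apply: Hc; rewrite i1 /= -ltnS prednK // (leq_trans _ hn).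
by have -> : i = n by apply/eqP; rewrite eqn_leq iN leqNgt h.
Qed.

Lemma region_a' i : a' i `<=` region i.
Proof. by move=> x; rewrite /region; case: ifP => _ // a'x; left. Qed.

Lemma region_exit i : (1 <= i <= n)%N -> exists y, region i y /\ (arc_target i y \/ ~ a i y).
Proof.
move=> hi; have hnn : (1 <= n <= n)%N by rewrite leqnn andbT (ltnW hn).
exists pn; rewrite /region /arc_target; case: ifP => h; last first.
  have -> : i = n by case/andP: hi => _ iN; apply/eqP; rewrite eqn_leq iN leqNgt h.
  by split; [exact: a''_a' | left].
split; first by right; exists n => //=; rewrite h leqnn.
have [en|nen] := eqVneq n i.+1; first by left; rewrite -en; exact: a''_a'.
right => aipn; apply: (a_disj hi hnn _ aipn (a''_a hnn hpn)).
by rewrite ltn_neqAle eq_sym nen h.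
Qed.

Lemma region_cover i (A : set P) (p : P) : (1 <= i <= n)%N ->
  (forall x, A x -> a' i x -> x = p) ->
  forall x, region i x -> x <> p -> ((a i)° x /\ ~ A x) \/ (arc_target i)° x \/ ~ a i x.
Proof.
move=> hi Aa' x + xp.
have a'x_cover : a' i x -> ((a i)° x /\ ~ A x) \/ (arc_target i)° x \/ ~ a i x.
  by move=> a'x; left; split; [exact: a'_int | move/Aa'/(_ a'x)].
rewrite /region; case: ifP => h; last exact: a'x_cover.
case=> [/a'x_cover //|[j /andP[ij jn] xj]].
have hj : (1 <= j <= n)%N by rewrite jn andbT (ltn_trans _ ij); case/andP: hi.
have [ej|nej] := eqVneq j i.+1; first by right; left; rewrite /arc_target h -ej; exact: a''_int.
right; right => aix; apply: (a_disj hi hj _ aix (a''_a hj xj)).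
by rewrite ltn_neqAle eq_sym nej ij.
Qed.

Lemma next_arc i (p : P) (A : set P) : (1 <= i <= n)%N -> closed A -> A p ->
  exposed A p -> a' i p -> (forall x, A x -> a' i x -> x = p) ->
  (~ arc_target i p -> (i < n)%N -> ~ a''_after i p) ->
  exists b : R -> P, [/\ continuous b, b 0 = p, arc_target i (b 1), trace b `<=` a i &
    [/\ (unit_inj b /\ (forall s, 0 < s <= 1 -> ~ A (b s))) \/ (forall s, b s = p),
        (forall x, trace b x -> (i < n)%N -> a' i.+1 x -> x = b 1) &
        exposed (trace b) (b 1)]].
Proof.
move=> hi cA Ap eAp a'p Aa' nB.
have [Kp|nKp] := pselect (arc_target i p).
  have tr : trace (fun=> p) = [set p] :> set P by apply: image_const; [exact: ler01|].
  exists (fun=> p); split => //; first exact: cst_continuous.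
    by rewrite tr => x ->; exact: a'_a.
  by split; [right | rewrite tr => x -> | rewrite tr; exact: exposed1].
have M_near : exists2 r : R, 0 < r &
    forall x, region i x -> ball p r x -> x = p \/ ((a i)° x /\ ~ A x).
  have a'_near x : a' i x -> x = p \/ ((a i)° x /\ ~ A x).
    move=> a'x; have [/Aa'/(_ a'x)|nAx] := pselect (A x); first by left.
    by right; split => //; exact: a'_int.
  rewrite /region; case: ifP => h; last by exists 1 => // x /a'_near.
  have [r r0 sub] := open_ball_sub (closed_openC (a''_after_closed (i := i))) (nB nKp h).
  by exists r => // x [/a'_near //|Bx] /sub.
have [f [[fc fi fl] f0 f1 fW fK]] := escape_arc (@open_interior _ (a i)) (a_closed hi)
  (@interior_subset _ _) cA Ap (a'_int hi a'p) eAp (arc_target_closed hi) nKp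
  (region_connected hi) (region_a' a'p) M_near (region_cover hi Aa') (region_exit hi).
exists f; split => //.
- move=> _ [s /andP[s0 s1] <-]; have [->|s0'] := eqVneq s 0; first by rewrite f0; exact: a'_a.
  have hs : 0 < s <= 1 by rewrite s1 andbT lt_neqAle eq_sym s0' s0.
  by apply: interior_subset; case: (fW s hs).
split.
- by left; split => // s /fW [].
- move=> _ [s /andP[s0 s1] <-] h a'x; have [->//|s1'] := eqVneq s 1.
  by exfalso; apply: (fK s); [rewrite s0 lt_neqAle s1' s1 | rewrite /arc_target h].
- exact: tame_arc_exposed.
Qed.

Lemma chain_meet_at_join k (G b : R -> P) (A : set P) : (1 <= k < n)%N -> G 1 = b 0 ->
  trace b `<=` a k.+1 -> (forall s, 0 < s <= 1 -> ~ A (b s)) ->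
  (forall s, unit_itv R s -> A (G s) \/ exists2 i, (1 <= i < k)%N & a i (G s)) ->
  unit_inj G -> forall s u, unit_itv R s -> unit_itv R u -> G s = b u -> s = 1 /\ u = 0.
Proof.
move=> /andP[k1 kn] Gb ba bA GA Gi s u hs hu e.
have [u0|u0'] := eqVneq u 0.
  by split => //; apply: Gi => //; [exact: unit_itv1 | rewrite e u0 Gb].
have up : 0 < u <= 1 by case/andP: hu => u0 ->; rewrite andbT lt_neqAle eq_sym u0' u0.
case: (GA s hs) => [|[i /andP[i1 ik] aiG]]; first by rewrite e => /(bA u up).
have hi : (1 <= i <= n)%N by rewrite i1 (leq_trans (ltnW ik) (ltnW kn)).
have hk1 : (1 <= k.+1 <= n)%N by rewrite kn.
by case: (a_disj hi hk1 _ aiG (ba _ _)); [rewrite ltnS | rewrite e; exists u].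
Qed.

(* A stage [k] chain lies on its last arc and in the [a i] with [i < k], so an
   arc in [a k.+1] can meet it only on the last arc. *)
Definition stage k := exists p al G t,
  [/\ arc_chain k p al G t, p 0%N = p0,
      (forall i, (1 <= i <= k)%N ->
         [/\ jordan_arc (al i), al i 0 = p i.-1, al i 1 = p i & trace (al i) `<=` a i]),
      (forall i, (1 <= i <= k)%N -> (i < n)%N -> a' i.+1 (p i)) &
      [/\ continuous (al k), (forall x, trace (al k) x -> (k < n)%N -> a' k.+1 x -> x = p k),
          exposed (trace (al k)) (p k), ((n <= k)%N -> p k = pn) &
          (forall s, unit_itv R s ->
             trace (al k) (G s) \/ exists2 i, (1 <= i < k)%N & a i (G s))]].

Lemma stage1 : stage 1.
Proof.
have h1 : (1 <= 1 <= n)%N by rewrite leqnn (ltnW hn).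
have nB : ~ arc_target 1 p0 -> (1 < n)%N -> ~ a''_after 1 p0.
  move=> nK h1n [j /andP[j1 jn] hj]; have hj' : (1 <= j <= n)%N by rewrite jn (ltnW j1).
  have [ej|nej] := eqVneq j 2.
    by subst j; apply: nK; rewrite /arc_target h1n /=; exact: a''_a'.
  apply: (a_disj h1 hj' _ (a'_a h1 hp0) (a''_a hj' hj)).
  by rewrite ltn_neqAle eq_sym nej j1.
have [b [bc b0 bK btr [bj bL bv]]] := next_arc h1 (@closed_set1 _ p0) erefl (@exposed1 _ p0) hp0
  (fun x e _ => e) nB.
have jb : jordan_arc b.
  by apply: jordan_arcW => //; case: bj => [[]|bp]; [left | right => s; rewrite b0].
exists (upd (fun=> p0) 1 (b 1)), (fun=> b), b, (upd (fun=> 1) 0 0); split => //.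
- by split; split; rewrite /upd //= => -[|[|i]] //=; rewrite ?lexx ?ler01.
- move=> i /andP[i1 i2]; have -> : i = 1%N by apply/eqP; rewrite eqn_leq i1 i2.
  by split.
- move=> i /andP[i1 i2]; have -> : i = 1%N by apply/eqP; rewrite eqn_leq i1 i2.
  by move=> h; move: bK; rewrite upd_eq /arc_target h.
rewrite upd_eq; split=> [||||s hs]; [exact: bc | exact: bL | exact: bv | |].
  by move=> hn1; have := leq_trans hn hn1.
by left; exists s.
Qed.

Lemma stage_succ k : (1 <= k < n)%N -> stage k -> stage k.+1.
Proof.
case/andP=> k1 kn [p [al [G [t [chain pz alP a'P [alc L1 ek pnk img]]]]]].
have hk : (1 <= k <= n)%N by rewrite k1 ltnW.
have hk1 : (1 <= k.+1 <= n)%N by rewrite kn.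
have hkk : (1 <= k <= k)%N by rewrite k1 leqnn.
have [_ _ alk1 alka] := alP k hkk.
have Ak : trace (al k) (p k) by rewrite -alk1; exists 1 => //; exact: unit_itv1.
have nB : ~ arc_target k.+1 (p k) -> (k.+1 < n)%N -> ~ a''_after k.+1 (p k).
  move=> _ _ [j /andP[j1 jn] hj]; have hj' : (1 <= j <= n)%N by rewrite jn (ltn_trans _ j1).
  exact: (a_disj hk hj' j1 (alka _ Ak) (a''_a hj' hj)).
have [b [bc b0 bK btr [bj bL bv]]] := next_arc hk1 (trace_closed alc) Ak ek
  (a'P k hkk kn) (fun x Ax => L1 x Ax kn) nB.
have bj' : unit_inj b \/ (forall s, b s = p k) by case: bj => [[]|]; [left | right].
have cross : unit_inj G -> unit_inj b ->
    forall s u, unit_itv R s -> unit_itv R u -> G s = b u -> s = 1 /\ u = 0.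
  move=> Gi bi; apply: (chain_meet_at_join _ _ btr _ img Gi); rewrite ?k1 //.
    by case: chain => -[_ _ _ -> _] _.
  case: bj => [[_ //]|bk]; have := bi 0 1 unit_itv0 unit_itv1; rewrite !bk => /(_ erefl) e.
  by have := @ltr01 R; rewrite e ltxx.
have [G' [t' [chain' img']]] := arc_chain_snoc chain bc b0 bj' cross.
exists (upd p k.+1 (b 1)), (upd al k.+1 b), G', t'; split => //.
- move=> i /andP[i1 /leqS_split[->|ik]].
    rewrite !upd_eq /= upd_lt //; split => //.
    by apply: jordan_arcW => //; case: bj' => [|bk]; [left | right => s; rewrite !bk].
  by rewrite !upd_lt ?ltnS ?(leq_trans (leq_pred _)) //; apply: alP; rewrite i1.
- move=> i /andP[i1 /leqS_split[->|ik]] h; first by rewrite upd_eq; move: bK; rewrite /arc_target h.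
  by rewrite upd_lt ?ltnS //; apply: a'P => //; rewrite i1.
rewrite !upd_eq; split=> [||||s hs]; [exact: bc | exact: bL | exact: bv | |].
- move=> hn1; have ek1 : k.+1 = n by apply/eqP; rewrite eqn_leq kn hn1.
  by move: bK; rewrite /arc_target ek1 ltnn.
- case: (img' s hs) => [|[u hu <-]]; first by left.
  right; case: (img u hu) => [AG|[i /andP[i1 ik] aiG]].
    by exists k; [rewrite k1 ltnSn | exact: alka].
  by exists i => //; rewrite i1 (ltn_trans ik).
Qed.

Lemma stage_all k : (1 <= k <= n)%N -> stage k.
Proof.
elim: k => [//|k IH] /andP[_ kn].
have [->|k0] := posnP k; first exact: stage1.
by apply: stage_succ; [rewrite k0 | apply: IH; rewrite k0 ltnW].
Qed.

End ArcThroughRegions.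

Theorem lemma5p6 (R : realType) (n : nat) (a a' a'' : nat -> set (R * R)) :
  (2 <= n)%N ->
  (forall i, (1 <= i <= n)%N ->
     regular_closed (a i) /\ regular_closed (a' i) /\ regular_closed (a'' i) /\
     a'' i !=set0 /\
     a'' i `&` closure (~` a' i) = set0 /\
     a' i `&` closure (~` a i) = set0) ->
  (forall i, (1 <= i <= n.-1)%N ->
     connected (a' i `|` \bigcup_(j in [set j | (i < j <= n)%N]) a'' j)) ->
  connected (a' n) ->
  (forall i j, (1 <= i <= n)%N -> (1 <= j <= n)%N -> (i.+1 < j)%N ->
     a i `&` a j = set0) ->
  forall p0 pn : R * R, a' 1%N p0 -> a'' n pn ->
  exists (p : nat -> R * R) (al : nat -> R -> R * R),
    [/\ p 0%N = p0, p n = pn, concat_jordan_arc n al p,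
        (forall i, (1 <= i < n)%N -> a' i.+1 (p i) /\ trace (al i) (p i))
      & (forall i, (1 <= i <= n)%N -> trace (al i) `<=` a i)].
Proof.
move=> hn H1 Hc Hcn Hd p0 pn hp0 hpn.
have nn : (1 <= n <= n)%N by rewrite leqnn andbT ltnW.
have [p [al [G [t [[[_ Gj G0 G1 t0] [tn tm Gt tr _]] pz alP a'P [_ _ _ pnk _]]]]]] :=
  stage_all hn H1 Hc Hcn Hd hp0 hpn nn.
exists p, al; split => //.
- exact: pnk.
- by split; [move=> i /alP[] | exists G, t].
- move=> i /andP[i1 iN]; have hi : (1 <= i <= n)%N by rewrite i1 ltnW.
  have [_ _ ali1 _] := alP i hi.
  by split; [exact: a'P | rewrite -ali1; exists 1 => //; exact: unit_itv1].
- by move=> i /alP[].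
Qed.
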